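(* Let $H=\sum_ic_iP_i$ be a Pauli Hamiltonian, $|\psi\rangle$ a state, $\mathcal{G}=(G^{[1]},\dots,G^{[m]})$ a grouping of $H$ and $\mathcal{R}=(G'^{[1]},\dots,G'^{[m]})$ a repacking of $\mathcal{G}$. Fix positive shot counts $M_1,\dots,M_m$ such that $G^{[j]}$ and $G'^{[j]}$ are each measured $M_j$ times. Define $\mathrm{Var}^*(\mathcal{G})=\min_w\mathrm{Var}(\overline{E}_{\mathcal{G}}(w))$ and $\mathrm{Var}^*(\mathcal{R})=\min_w\mathrm{Var}(\overline{E}_{\mathcal{R}}(w))$, where the variances are the exact variances (including all within-group covariances). Then $\mathrm{Var}^*(\mathcal{R})\le\mathrm{Var}^*(\mathcal{G})$.
   Context: A Pauli Hamiltonian is $H=\sum_{i=1}^Nc_iP_i$ with real nonzero $c_i$ and distinct $n$-qubit Pauli strings. A grouping is a list of pairwise disjoint sets of mutually commuting Pauli terms of $H$ covering all terms; an overlapped grouping drops disjointness; a repacking of $(G^{[1]},\dots,G^{[m]})$ is an overlapped grouping $(G'^{[1]},\dots,G'^{[m]})$ with $G^{[j]}\subseteq G'^{[j]}$. Measurement model: group $j$ is measured in $M_j$ independent shots, each giving simultaneous $\pm1$ outcomes of all its operators with the Born-rule distribution for $|\psi\rangle$; different groups use independent shots. For an (overlapped) grouping $\mathcal{S}$, $\Gamma_{\mathcal{S}}(i)=\{j:P_i\in \text{group } j\}$, $\overline{\langle P_i\rangle}_{(j)}$ is the sample mean of $P_i$ over group $j$'s shots, and $\overline{E}_{\mathcal{S}}(w)=\sum_ic_i\sum_{j\in\Gamma_{\mathcal{S}}(i)}w_{i,j}\overline{\langle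 P_i\rangle}_{(j)}$ with real weights satisfying $\sum_{j\in\Gamma_{\mathcal{S}}(i)}w_{i,j}=1$ for each $i$; the minimum is over all such weights. *)

(* Complex scalars: an arbitrary numClosedFieldType C
   (e.g. R[i] for a real closed field R, or algC); this is a generalization
   of the complex numbers. *)
From HB Require Import structures.
From mathcomp Require Import all_boot all_order all_algebra.
Set Implicit Arguments.
Unset Strict Implicit.
Unset Printing Implicit Defensive.
Import Order.TTheory GRing.Theory Num.Theory.
Local Open Scope ring_scope.

Section Pauli.
Variable C : numClosedFieldType.

(* single-qubit Pauli index: 0 = I, 1 = X, 2 = Y, 3 = Z *)
Definition pauli_string (n : nat) := {ffun 'I_n -> 'I_4}.

(* matrix entry <a| sigma_p |b>, with a = row, b = column *)
Definition pauli1 (p : 'I_4) (a b : bool) : C :=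
  match val p with
  | 0 => (a == b)%:R
  | 1 => (a != b)%:R
  | 2 => if a == b then 0 else if a then 'i else - 'i
  | _ => if a == b then (if a then -1 else 1) else 0
  end.

Definition bit (k x : nat) : bool := odd (x %/ 2 ^ k).

(* the n-qubit Pauli string as a 2^n x 2^n matrix (tensor product, entrywise) *)
Definition pauli_mx (n : nat) (p : pauli_string n) : 'M[C]_(2 ^ n) :=
  \matrix_(x, y) \prod_(k < n) pauli1 (p k) (bit k x) (bit k y).

Definition mx_commute (d : nat) (A B : 'M[C]_d) : Prop := A *m B = B *m A.

Definition pauli_hamiltonian (n N : nat) (P : 'I_N -> pauli_string n)
  (c : 'I_N -> C) : Prop :=
  injective P /\ (forall i, c i \is Num.real /\ c i != 0).

Definition is_state (n : nat) (psi : 'cV[C]_(2 ^ n)) : Prop :=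
  \sum_(x < 2 ^ n) (psi x 0)^* * psi x 0 = 1.

Definition overlapped_grouping (n N m : nat) (P : 'I_N -> pauli_string n)
  (S : 'I_m -> {set 'I_N}) : Prop :=
  (forall i, exists j, i \in S j) /\
  (forall j i k, i \in S j -> k \in S j ->
     mx_commute (pauli_mx (P i)) (pauli_mx (P k))).

Definition grouping (n N m : nat) (P : 'I_N -> pauli_string n)
  (S : 'I_m -> {set 'I_N}) : Prop :=
  overlapped_grouping P S /\
  (forall j j', j != j' -> [disjoint S j & S j']).

Definition repacking (n N m : nat) (P : 'I_N -> pauli_string n)
  (G R : 'I_m -> {set 'I_N}) : Prop :=
  overlapped_grouping P R /\ (forall j, G j \subset R j).

(* outcome b : bool stands for the eigenvalue (-1)^b *)
Definition sgn (b : bool) : C := if b then -1 else 1.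

Definition proj (n : nat) (p : pauli_string n) (b : bool) : 'M[C]_(2 ^ n) :=
  (2%:R)^-1 *: (1%:M + sgn b *: pauli_mx p).

(* Born-rule probability of the joint outcome s for one shot of group S j.
   Outcomes of operators outside the group are fixed to false (+1). *)
Definition born (n N m : nat) (P : 'I_N -> pauli_string n)
  (psi : 'cV[C]_(2 ^ n)) (S : 'I_m -> {set 'I_N}) (j : 'I_m)
  (s : {ffun 'I_N -> bool}) : C :=
  if [forall i, (i \notin S j) ==> ~~ s i] then
    ((map_mx (fun z => z^*) psi)^T
       *m (\big[@mulmx C _ _ _/1%:M]_(i in S j) proj (P i) (s i)) *m psi) 0 0
  else 0.

(* sample space: for every group j, the outcomes of its M j shots *)
Definition outcomes (N m : nat) (M : 'I_m -> nat) :=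
  {dffun forall j : 'I_m, {ffun 'I_(M j) -> {ffun 'I_N -> bool}}}.

Definition prob (n N m : nat) (P : 'I_N -> pauli_string n)
  (psi : 'cV[C]_(2 ^ n)) (S : 'I_m -> {set 'I_N}) (M : 'I_m -> nat)
  (om : outcomes N M) : C :=
  \prod_(j < m) \prod_(k < M j) born P psi S j (om j k).

Definition sample_mean (N m : nat) (M : 'I_m -> nat) (om : outcomes N M)
  (i : 'I_N) (j : 'I_m) : C :=
  (M j)%:R^-1 * \sum_(k < M j) sgn (om j k i).

Definition estimator (N m : nat) (c : 'I_N -> C) (S : 'I_m -> {set 'I_N})
  (M : 'I_m -> nat) (w : 'I_N -> 'I_m -> C) (om : outcomes N M) : C :=
  \sum_(i < N) c i * \sum_(j < m | i \in S j) w i j * sample_mean om i j.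

Definition weights (N m : nat) (S : 'I_m -> {set 'I_N})
  (w : 'I_N -> 'I_m -> C) : Prop :=
  (forall i j, w i j \is Num.real) /\
  (forall i, \sum_(j < m | i \in S j) w i j = 1).

Definition Var (n N m : nat) (P : 'I_N -> pauli_string n) (c : 'I_N -> C)
  (psi : 'cV[C]_(2 ^ n)) (S : 'I_m -> {set 'I_N}) (M : 'I_m -> nat)
  (w : 'I_N -> 'I_m -> C) : C :=
  \sum_(om : outcomes N M) prob P psi S om * (estimator c S w om) ^+ 2
  - (\sum_(om : outcomes N M) prob P psi S om * estimator c S w om) ^+ 2.

End Pauli.

From HB Require Import structures.
From mathcomp Require Import all_boot all_order all_algebra.
Set Implicit Arguments.
Unset Strict Implicit.
Unset Printing Implicit Defensive.
Import Order.TTheory GRing.Theory Num.Theory.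
Local Open Scope ring_scope.

(* Give the repacking the weights of the grouping, extended by zero on the
   added terms.  The repacked estimator then reads only the outcomes of the
   original operators of each group, and their joint Born distribution in a
   shot of G'^[j] is the one of a shot of G^[j]: summing the ordered product
   of projectors over the outcome of an added operator replaces its factor
   P(false) + P(true) by the identity.  The two estimators therefore have the
   same law, hence the same variance. *)

Lemma bigA_distr_bigA_dep (R : pzSemiRingType) (I : finType) (T_ : I -> finType)
    (F : forall i, T_ i -> R) :
  \prod_i \sum_(t : T_ i) F i t = \sum_(f : {dffun forall i, T_ i}) \prod_i F i (f i).
Proof.
pose F' i := [ffun t => F i t].
under eq_bigr do rewrite (big_tag F).
rewrite bigA_distr_big_dep.
transitivity (\sum_(g in family (tagged_with T_)) \prod_i untag 0 (F' i) (g i)).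
  apply: eq_bigr => g _; apply: eq_bigr => i _.
  by rewrite /untag; case: eqP => // ?; rewrite ffunE.
rewrite -big_fprod (reindex (@fprod_of_dffun _ T_)); last first.
  exact/onW_bij/fprod_of_dffun_bij.
by apply: eq_bigr => f _; apply: eq_bigr => i _; rewrite fprodE ffunE.
Qed.

Lemma natr_eq_ffun (R : comPzSemiRingType) (I : finType) (T_ : I -> eqType)
    (f g : {dffun forall i, T_ i}) :
  (f == g)%:R = \prod_i (f i == g i)%:R :> R.
Proof.
have [->|neq_fg] := eqVneq f g; first by rewrite big1 // => i _; rewrite eqxx.
have [i neq_i] : exists i, f i != g i.
  apply/existsP; rewrite -negb_forall; apply: contra neq_fg => /forallP eq_fg.
  by apply/eqP/ffunP => i; apply/eqP.
by rewrite (bigD1 i) //= (negbTE neq_i) mul0r.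
Qed.

Lemma prod_marginal (R : pzSemiRingType) (I : finType) (X : I -> bool -> R)
    (D A : {set I}) (s0 : I -> bool) :
  (forall i, X i false + X i true = 1) -> A \subset D ->
  \prod_(i in A) X i (s0 i)
  = \sum_(s : {ffun I -> bool} |
           [forall i, if i \in D then (i \in A) ==> (s i == s0 i) else ~~ s i])
      \prod_(i in D) X i (s i).
Proof.
move=> X_sum1 /subsetP sAD.
transitivity (\prod_(i in D) if i \in A then X i (s0 i) else 1).
  rewrite -big_mkcondr; apply: eq_bigl => i.
  by case: (boolP (i \in A)) => [/sAD ->|]; rewrite ?andbF.
transitivity (\prod_(i in D) \sum_(b | (i \in A) ==> (b == s0 i)) X i b).
  apply: eq_bigr => i _; case: (i \in A) => /=.
    by rewrite (big_pred1 (s0 i)) // => b; rewrite eq_sym.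
  by rewrite big_bool /= addrC X_sum1.
rewrite (big_distr_big_dep false); apply: eq_bigl => s.
rewrite inE; apply: eq_forallb => i; rewrite /finfun.fmem /=.
by case: ifP => _; rewrite ?inE; case: (s i).
Qed.

(* Forgets the outcomes outside [A], reading them as [false] (eigenvalue +1),
   as [born] does. *)
Definition restr_outcome (I : finType) (A : {set I}) (s : {ffun I -> bool}) :
  {ffun I -> bool} := [ffun i => (i \in A) && s i].

Lemma restr_outcome_fibreE (I : finType) (A D : {set I}) (s0 s : {ffun I -> bool}) :
  A \subset D -> [forall i, (i \notin A) ==> ~~ s0 i] ->
  (restr_outcome A s == s0) && [forall i, (i \notin D) ==> ~~ s i]
  = [forall i, if i \in D then (i \in A) ==> (s i == s0 i) else ~~ s i].
Proof.
move=> sAD /forallP s0_out.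
have AD i : (i \in A) ==> (i \in D) by apply/implyP/(subsetP sAD).
apply/andP/forallP => [[/eqP/ffunP restr_s /forallP s_out] i | s_in].
  move: (restr_s i) (s_out i) (s0_out i) (AD i); rewrite ffunE.
  by case: (i \in A); case: (i \in D); case: (s i); case: (s0 i).
split; last by apply/forallP => i; move: (s_in i); case: (i \in D).
apply/eqP/ffunP => i; move: (s_in i) (s0_out i) (AD i); rewrite ffunE.
by case: (i \in A); case: (i \in D); case: (s i); case: (s0 i).
Qed.

Section Repacking.
Variables (C : numClosedFieldType) (n N m : nat).
Variables (P : 'I_N -> pauli_string n) (psi : 'cV[C]_(2 ^ n)).
Variables (G R : 'I_m -> {set 'I_N}) (M : 'I_m -> nat).
Hypothesis sub_GR : forall j, G j \subset R j.

Lemma proj_sum (p : pauli_string n) : proj C p false + proj C p true = 1.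
Proof.
rewrite /proj /sgn -scalerDr scale1r scaleN1r addrACA subrr addr0.
by rewrite -mulr2n -scaler_nat scalerA mulVf ?scale1r // pnatr_eq0.
Qed.

Lemma sum_born_restr j (s' : {ffun 'I_N -> bool}) :
  \sum_(s | restr_outcome (G j) s == s') born P psi R j s = born P psi G j s'.
Proof.
rewrite /born; case: ifP => [s'_out | /negbT]; last first.
  rewrite negb_forall => /existsP[i]; rewrite negb_imply negbK => /andP[iNG s'i].
  rewrite big_pred0 // => s; apply: contraNF iNG => /eqP restr_s.
  by move: s'i; rewrite -restr_s ffunE => /andP[].
have mulmxE : @mulmx C (2 ^ n) (2 ^ n) (2 ^ n) = *%R by [].
have mx1E : 1%:M = 1 :> 'M[C]_(2 ^ n) by [].
rewrite mulmxE mx1E -big_mkcondr.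
rewrite (prod_marginal (X := fun i => proj C (P i)) s' (fun i => proj_sum (P i)) (sub_GR j)).
rewrite mulmx_sumr mulmx_suml summxE; apply: eq_bigl => s.
exact: restr_outcome_fibreE.
Qed.

Definition restr_outcomes (om : outcomes N M) : outcomes N M :=
  [ffun j => [ffun k => restr_outcome (G j) (om j k)]].

Lemma sum_prob_restr (om' : outcomes N M) :
  \sum_(om | restr_outcomes om == om') prob P psi R om = prob P psi G om'.
Proof.
transitivity (\sum_om (restr_outcomes om == om')%:R * prob P psi R om).
  by rewrite big_mkcond; apply: eq_bigr => om _; case: eqP; rewrite ?mul1r ?mul0r.
transitivity (\prod_j \sum_(t : {ffun 'I_(M j) -> {ffun 'I_N -> bool}}) \prod_(k < M j)
    ((restr_outcome (G j) (t k) == om' j k)%:R * born P psi R j (t k))).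
  rewrite bigA_distr_bigA_dep; apply: eq_bigr => om _.
  rewrite /prob natr_eq_ffun -big_split; apply: eq_bigr => j _.
  by rewrite ffunE natr_eq_ffun -big_split; apply: eq_bigr => k _; rewrite ffunE.
apply: eq_bigr => j _.
under [RHS]eq_bigr do rewrite -sum_born_restr big_mkcond.
rewrite bigA_distr_bigA; apply: eq_bigr => t _; apply: eq_bigr => k _.
by case: eqP; rewrite ?mul1r ?mul0r.
Qed.

Lemma sum_prob_restr_comp (F : outcomes N M -> C) :
  \sum_om prob P psi R om * F (restr_outcomes om) = \sum_om prob P psi G om * F om.
Proof.
rewrite (partition_big restr_outcomes predT) //=; apply: eq_bigr => om' _.
by rewrite -sum_prob_restr mulr_suml; apply: eq_bigr => om /eqP ->.
Qed.

Definition extend_weights (w : 'I_N -> 'I_m -> C) (i : 'I_N) (j : 'I_m) : C :=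
  if i \in G j then w i j else 0.

Lemma sum_extend_weights (w : 'I_N -> 'I_m -> C) i (x : 'I_m -> C) :
  \sum_(j | i \in R j) extend_weights w i j * x j = \sum_(j | i \in G j) w i j * x j.
Proof.
rewrite big_mkcond [RHS]big_mkcond; apply: eq_bigr => j _; rewrite /extend_weights.
case iG: (i \in G j); first by rewrite (subsetP (sub_GR j) _ iG).
by case: (i \in R j); rewrite ?mul0r.
Qed.

Lemma weights_extend w : weights G w -> weights R (extend_weights w).
Proof.
move=> [w_real w_sum1]; split=> [i j | i].
  by rewrite /extend_weights; case: ifP; rewrite ?rpred0.
rewrite -(w_sum1 i) -(eq_bigr _ (fun j _ => mulr1 (extend_weights w i j))).
by rewrite sum_extend_weights; under eq_bigr do rewrite mulr1.
Qed.

Lemma estimator_extend (c : 'I_N -> C) w (om : outcomes N M) :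
  estimator c R (extend_weights w) om = estimator c G w (restr_outcomes om).
Proof.
apply: eq_bigr => i _; rewrite sum_extend_weights; congr (_ * _).
apply: eq_bigr => j iG; congr (_ * (_ * _)); apply: eq_bigr => k _.
by rewrite !ffunE iG.
Qed.

Lemma Var_extend (c : 'I_N -> C) w :
  Var P c psi R M (extend_weights w) = Var P c psi G M w.
Proof.
rewrite /Var; under eq_bigr do rewrite estimator_extend.
under [in X in _ - X]eq_bigr do rewrite estimator_extend.
by rewrite (sum_prob_restr_comp (fun om => estimator c G w om ^+ 2))
  (sum_prob_restr_comp (estimator c G w)).
Qed.
End Repacking.

Unset Implicit Arguments.

Theorem theorem6 (C : numClosedFieldType) (n N m : nat)
  (P : 'I_N -> pauli_string n) (c : 'I_N -> C) (psi : 'cV[C]_(2 ^ n))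
  (G R : 'I_m -> {set 'I_N}) (M : 'I_m -> nat) :
  pauli_hamiltonian P c ->
  is_state psi ->
  grouping C P G ->
  repacking C P G R ->
  (forall j, (0 < M j)%N) ->
  forall wG : 'I_N -> 'I_m -> C, weights G wG ->
  exists wR : 'I_N -> 'I_m -> C, weights R wR /\
    Var P c psi R M wR <= Var P c psi G M wG.
Proof.
move=> _ _ _ [_ sub_GR] _ wG wG_weights.
exists (extend_weights G wG); split; first exact: weights_extend.
by rewrite Var_extend.
Qed.
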